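(* Let $N$ be a nonnegative integer and let $a,b,d,f\in\mathbb{C}$ be such that every hypergeometric series below is well defined (no lower parameter is a nonpositive integer) and the denominator $f(a-f)-db$ is nonzero. Put $$g=\frac{f(b+d-a)(f-a)}{f(a-f)-db}.$$ Then $$ {}_{7}F_{6}\left[\begin{matrix} a,\ 1+\frac{a}{2},\ b,\ a-f+1,\ d,\ f+1,\ -N\\ \frac{a}{2},\ 1+a-b,\ f,\ 1+a-d,\ a-f,\ 1+a+N\end{matrix};1\right]=\frac{(1+a)_N\,(a-b-d)_N}{(1+a-b)_N\,(1+a-d)_N}\cdot\frac{(g+1)_N}{(g)_N}.$$
   Context: $(x)_n$ denotes the Pochhammer symbol: $(x)_0=1$, $(x)_n=x(x+1)\cdots(x+n-1)$ for $n\ge1$. The generalized hypergeometric function is $${}_{r+1}F_{r}\left[\begin{matrix} a_1,\dots,a_{r+1}\\ b_1,\dots,b_r\end{matrix};z\right]=\sum_{n=0}^{\infty}\frac{(a_1)_n\cdots(a_{r+1})_n}{(b_1)_n\cdots(b_r)_n\,n!}z^n ,$$ where no $b_i$ is a nonpositive integer; when one upper parameter equals $-N$ with $N$ a nonnegative integer the series terminates. *)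

From HB Require Import structures.
From mathcomp Require Import all_boot all_order all_algebra.
From mathcomp Require Import complex.
From mathcomp Require Import reals.
Set Implicit Arguments. Unset Strict Implicit. Unset Printing Implicit Defensive.
Import Order.TTheory GRing.Theory Num.Theory.
Local Open Scope ring_scope.

Definition poch (C : comRingType) (x : C) (n : nat) : C :=
  \prod_(i < n) (x + i%:R).

Definition nonpos_int (C : ringType) (x : C) : Prop :=
  exists k : nat, x = - k%:R.

Definition hyp_term (C : fieldType) (us ls : seq C) (z : C) (n : nat) : C :=
  (\prod_(u <- us) poch u n) / ((\prod_(l <- ls) poch l n) * n`!%:R) * z ^+ n.

(* The hypergeometric series with an upper parameter -N terminates:
   all terms with index n > N vanish since (-N)_n = 0.  We therefore
   represent it by its partial sum over 0 <= n <= N. *)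
Definition hyp_terminating (C : fieldType) (us ls : seq C) (z : C) (N : nat) : C :=
  \sum_(n < N.+1) hyp_term us ls z n.

(* Since (f+1)_k (a-f+1)_k / ((f)_k (a-f)_k) = (f+k)(a-f+k) / (f(a-f))
   = 1 + k(a+k) / (f(a-f)), the 7F6 is the very-well-poised terminating 5F4
   of Dougall plus 1/(f(a-f)) times the same 5F4 weighted by k(a+k).  Shifting
   k to k+1 turns the weighted sum into a constant multiple of the 5F4 with
   parameters (a+2, b+1, d+1, N-1), so Dougall's summation evaluates both parts
   and the two closed forms combine into the stated product.  Dougall's formula
   is itself proved by induction on N: a telescoping certificate yields the
   contiguous relation  b d N F + (a-b-d+N) W = 0  between the 5F4 sum F and its
   weighted version W, and the shift expresses W through the sum at N-1. *)

From HB Require Import structures.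
From mathcomp Require Import all_boot all_order all_algebra.
From mathcomp Require Import complex.
From mathcomp Require Import reals.
From mathcomp Require Import ring.
Import Order.TTheory GRing.Theory Num.Theory.
Local Open Scope ring_scope.

Section Pochhammer.
Set Implicit Arguments.
Unset Strict Implicit.
Variable C : comNzRingType.
Implicit Types (x : C) (n : nat).

Lemma poch0 x : poch x 0 = 1.
Proof. by rewrite /poch big_ord0. Qed.

Lemma pochS x n : poch x n.+1 = poch x n * (x + n%:R).
Proof. by rewrite /poch big_ord_recr. Qed.

Lemma pochSl x n : poch x n.+1 = x * poch (x + 1) n.
Proof.
rewrite /poch big_ord_recl addr0; congr (_ * _); apply: eq_bigr => i _.
by rewrite lift0 -natr1; ring.
Qed.

Lemma poch_addr1 x n : poch (x + 1) n * x = poch x n * (x + n%:R).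
Proof. by rewrite -pochS pochSl mulrC. Qed.

End Pochhammer.

Lemma not_nonpos_int_addn (C : nzRingType) (x : C) k : ~ nonpos_int x -> x + k%:R != 0.
Proof. by move=> hx; apply/eqP => e; apply: hx; exists k; rewrite -[x](addrK k%:R) e add0r. Qed.

Lemma not_nonpos_int_neq0 (C : nzRingType) (x : C) : ~ nonpos_int x -> x != 0.
Proof. by move/(not_nonpos_int_addn 0); rewrite addr0. Qed.

Lemma not_nonpos_int_add1 (C : nzRingType) (x : C) : ~ nonpos_int x -> ~ nonpos_int (x + 1).
Proof. by move=> hx [k e]; apply: hx; exists k.+1; rewrite -natr1 opprD -e addrK. Qed.

Lemma poch_neq0 (C : idomainType) (x : C) n : ~ nonpos_int x -> poch x n != 0.
Proof. by move=> hx; apply/prodf_neq0 => i _; exact: not_nonpos_int_addn. Qed.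

Lemma poch_addr1E (C : fieldType) (x : C) n :
  x != 0 -> poch (x + 1) n = poch x n * (x + n%:R) / x.
Proof. by move=> hx; rewrite -poch_addr1 mulfK. Qed.

Section Dougall.
Set Implicit Arguments.
Unset Strict Implicit.
Variable C : numFieldType.
Implicit Types (a b d : C) (N k : nat).

(* The factor (a + 2k) / a is (1 + a/2)_k / (a/2)_k. *)
Definition dougall_term a b d N k : C :=
  poch a k * (a + 2 * k%:R) * (poch b k * poch d k) * poch (- N%:R) k /
  (a * k`!%:R * poch (1 + a - b) k * poch (1 + a - d) k * poch (1 + a + N%:R) k).

Definition dougall_sum a b d N : C := \sum_(k < N.+1) dougall_term a b d N k.

Definition dougall_weighted_sum a b d N : C :=
  \sum_(k < N.+1) k%:R * (a + k%:R) * dougall_term a b d N k.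

Definition dougall_rhs a b d N : C :=
  poch (1 + a) N * poch (1 + a - b - d) N / (poch (1 + a - b) N * poch (1 + a - d) N).

Definition dougall_admissible a b d N : Prop :=
  [/\ ~ nonpos_int (a / 2), ~ nonpos_int (1 + a - b), ~ nonpos_int (1 + a - d)
    & ~ nonpos_int (1 + a + N%:R)].

(* The antidifference found by Gosper's algorithm for the summand of
   [dougall_certificate_telescope]. *)
Definition dougall_certificate a b d N m : C :=
  poch a m.+1 * poch b m.+1 * poch d m.+1 * poch (- N%:R) m.+1 /
  (a * m`!%:R * poch (1 + a - b) m * poch (1 + a - d) m * poch (1 + a + N%:R) m).

Definition dougall_shift_factor a b d N : C :=
  - N.+1%:R * (a + 1) * (a + 2) * b * d /
  ((1 + a - b) * (1 + a - d) * (1 + a + N.+1%:R)).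

Lemma natrS_neq0 n : (n.+1%:R : C) != 0.
Proof. by rewrite pnatr_eq0. Qed.

Lemma natr_fact_neq0 n : (n`!%:R : C) != 0.
Proof. by rewrite pnatr_eq0 -lt0n fact_gt0. Qed.

Lemma dougall_admissible_neq0 a b d N : dougall_admissible a b d N -> a != 0.
Proof.
case=> /not_nonpos_int_neq0 ha2 _ _ _.
by apply: contraNneq ha2 => ->; rewrite mul0r.
Qed.

Lemma dougall_admissible_shift a b d N :
  dougall_admissible a b d N.+1 -> dougall_admissible (a + 2) (b + 1) (d + 1) N.
Proof.
case=> ha2 hb hd hN; split.
- have -> : (a + 2) / 2 = a / 2 + 1 by field.
  exact: not_nonpos_int_add1.
- have -> : 1 + (a + 2) - (b + 1) = 1 + a - b + 1 by ring.
  exact: not_nonpos_int_add1.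
- have -> : 1 + (a + 2) - (d + 1) = 1 + a - d + 1 by ring.
  exact: not_nonpos_int_add1.
- have -> : 1 + (a + 2) + N%:R = 1 + a + N.+1%:R + 1 by rewrite -natr1; ring.
  exact: not_nonpos_int_add1.
Qed.

Lemma dougall_certificate_telescope a b d N m :
  a != 0 -> ~ nonpos_int (1 + a - b) -> ~ nonpos_int (1 + a - d) ->
  ~ nonpos_int (1 + a + N%:R) ->
  \sum_(k < m.+1)
     (b * d * N%:R + (a - b - d + N%:R) * (k%:R * (a + k%:R))) * dougall_term a b d N k
  = - dougall_certificate a b d N m.
Proof.
move=> ha hb hd hN; elim: m => [|m IH].
  rewrite big_ord1 /dougall_term /dougall_certificate /= !poch0 !pochS !poch0.
  by field; rewrite natr_fact_neq0 ha.
rewrite big_ord_recr /= IH /dougall_term /dougall_certificate !pochS !factS !natrM.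
field.
by rewrite ha nat1r natrS_neq0 natr_fact_neq0 !poch_neq0 // !not_nonpos_int_addn.
Qed.

Lemma dougall_certificate_N a b d N : dougall_certificate a b d N N = 0.
Proof. by rewrite /dougall_certificate [poch (- _) _]pochS addNr !(mulr0, mul0r). Qed.

Lemma dougall_contiguity a b d N : dougall_admissible a b d N ->
  b * d * N%:R * dougall_sum a b d N + (a - b - d + N%:R) * dougall_weighted_sum a b d N = 0.
Proof.
move=> adm; have ha := dougall_admissible_neq0 adm; case: adm => _ hb hd hN.
rewrite /dougall_sum /dougall_weighted_sum !big_distrr -big_split /=.
transitivity (- dougall_certificate a b d N N).
  by rewrite -dougall_certificate_telescope //; apply: eq_bigr => k _; ring.
by rewrite dougall_certificate_N oppr0.
Qed.

Lemma dougall_term_shift a b d N k : dougall_admissible a b d N.+1 ->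
  k.+1%:R * (a + k.+1%:R) * dougall_term a b d N.+1 k.+1
  = dougall_shift_factor a b d N * dougall_term (a + 2) (b + 1) (d + 1) N k.
Proof.
move=> adm; have adm' := dougall_admissible_shift adm.
have ha := dougall_admissible_neq0 adm; have ha2 := dougall_admissible_neq0 adm'.
case: adm adm' => _ hb hd hN [_ hb' hd' hN'].
have -> : k.+1%:R * (a + k.+1%:R) * dougall_term a b d N.+1 k.+1 =
    k.+1%:R * poch a k.+2 * (a + 2 * k.+1%:R) * (poch b k.+1 * poch d k.+1) *
    poch (- N.+1%:R) k.+1 / (a * k.+1`!%:R * poch (1 + a - b) k.+1 *
    poch (1 + a - d) k.+1 * poch (1 + a + N.+1%:R) k.+1).
  by rewrite /dougall_term [poch a k.+2]pochS; ring.
rewrite /dougall_term /dougall_shift_factor !pochSl factS natrM.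
have -> : a + 1 + 1 = a + 2 by ring.
have -> : - N.+1%:R + 1 = - N%:R :> C by rewrite -natr1; ring.
have -> : 1 + a - b + 1 = 1 + (a + 2) - (b + 1) by ring.
have -> : 1 + a - d + 1 = 1 + (a + 2) - (d + 1) by ring.
have -> : 1 + a + N.+1%:R + 1 = 1 + (a + 2) + N%:R by rewrite -natr1; ring.
field.
by rewrite ha ha2 !nat1r natrS_neq0 natr_fact_neq0 !poch_neq0 // !not_nonpos_int_neq0.
Qed.

Lemma dougall_weighted_sum_shift a b d N : dougall_admissible a b d N.+1 ->
  dougall_weighted_sum a b d N.+1
  = dougall_shift_factor a b d N * dougall_sum (a + 2) (b + 1) (d + 1) N.
Proof.
move=> adm; rewrite /dougall_weighted_sum big_ord_recl mul0r mul0r add0r.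
by rewrite /dougall_sum big_distrr; apply: eq_bigr => k _; rewrite lift0 dougall_term_shift.
Qed.

Lemma dougall_rhs_shift a b d N : dougall_admissible a b d N.+1 ->
  dougall_shift_factor a b d N * dougall_rhs (a + 2) (b + 1) (d + 1) N
  = - N.+1%:R * b * d * poch (1 + a) N.+1 * poch (1 + a - b - d) N /
    (poch (1 + a - b) N.+1 * poch (1 + a - d) N.+1).
Proof.
move=> adm; have adm' := dougall_admissible_shift adm.
case: adm adm' => _ hb hd hN [_ hb' hd' hN'].
have shift_a : poch (1 + a + 1) N = (a + 2) * poch (1 + (a + 2)) N / (1 + a + N.+1%:R).
  have -> : 1 + (a + 2) = 1 + a + 1 + 1 by ring.
  have -> : a + 2 = 1 + a + 1 by ring.
  rewrite -pochSl pochS -natr1; field.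
  by have := not_nonpos_int_neq0 hN; rewrite -natr1 addrA.
rewrite /dougall_rhs /dougall_shift_factor !pochSl shift_a.
have -> : 1 + (a + 2) - (b + 1) - (d + 1) = 1 + a - b - d by ring.
have -> : 1 + a - b + 1 = 1 + (a + 2) - (b + 1) by ring.
have -> : 1 + a - d + 1 = 1 + (a + 2) - (d + 1) by ring.
field.
by rewrite nat1r !poch_neq0 // !not_nonpos_int_neq0.
Qed.

Lemma dougall_sum_degenerate a b d N : a != 0 -> b * d = 0 -> dougall_sum a b d N = 1.
Proof.
move=> ha bd0; rewrite /dougall_sum big_ord_recl big1 ?addr0.
  by rewrite /dougall_term /= !poch0 fact0 mulr0 addr0 !(mul1r, mulr1) divff.
move=> k _; rewrite /dougall_term lift0.
have -> : poch b k.+1 * poch d k.+1 = 0 by rewrite !pochSl mulrACA bd0 mul0r.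
by rewrite !(mul0r, mulr0).
Qed.

Theorem dougall_sumE a b d N :
  dougall_admissible a b d N -> dougall_sum a b d N = dougall_rhs a b d N.
Proof.
elim: N a b d => [|N IH] a b d adm; have ha := dougall_admissible_neq0 adm.
  rewrite /dougall_sum big_ord1 /dougall_term /dougall_rhs /= !poch0 fact0.
  by rewrite mulr0 addr0 !(mul1r, mulr1) invr1 divff.
have adm' := adm; case: adm' => _ hb hd _.
have [bd0|bd0] := eqVneq (b * d) 0.
  rewrite dougall_sum_degenerate // /dougall_rhs.
  move/eqP: bd0 hb hd; rewrite mulf_eq0 => /orP[]/eqP-> hb hd;
    by rewrite !subr0 in hb hd *; field; rewrite !poch_neq0.
have /eqP := dougall_contiguity adm.
rewrite dougall_weighted_sum_shift // (IH _ _ _ (dougall_admissible_shift adm)).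
rewrite dougall_rhs_shift // addr_eq0 => /eqP contiguity.
apply: (@mulfI _ (b * d * N.+1%:R)); first by rewrite mulf_neq0 ?natrS_neq0.
rewrite contiguity /dougall_rhs [poch (1 + a - b - d) N.+1]pochS.
by field; rewrite !poch_neq0.
Qed.

Corollary dougall_weighted_sumE a b d N : dougall_admissible a b d N.+1 ->
  dougall_weighted_sum a b d N.+1
  = - N.+1%:R * b * d * poch (1 + a) N.+1 * poch (1 + a - b - d) N /
    (poch (1 + a - b) N.+1 * poch (1 + a - d) N.+1).
Proof.
move=> adm; rewrite dougall_weighted_sum_shift // -dougall_rhs_shift //.
by rewrite (dougall_sumE (dougall_admissible_shift adm)).
Qed.

Lemma very_well_poised_7F6_term a b d f N k :
  dougall_admissible a b d N -> ~ nonpos_int f -> ~ nonpos_int (a - f) ->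
  hyp_term [:: a; 1 + a / 2; b; a - f + 1; d; f + 1; - N%:R]
    [:: a / 2; 1 + a - b; f; 1 + a - d; a - f; 1 + a + N%:R] 1 k
  = dougall_term a b d N k + k%:R * (a + k%:R) * dougall_term a b d N k / (f * (a - f)).
Proof.
move=> adm hf haf; have ha := dougall_admissible_neq0 adm; case: adm => ha2 hb hd hN.
rewrite /hyp_term !big_cons big_nil expr1n mulr1 /dougall_term (addrC 1 (a / 2)).
rewrite !poch_addr1E ?not_nonpos_int_neq0 //.
by field; rewrite ha natr_fact_neq0 !poch_neq0 // !not_nonpos_int_neq0.
Qed.

End Dougall.

Local Open Scope complex_scope.

Theorem mainTheorem1 (R : realType) (N : nat) (a b d f : R[i])
  (ha2 : ~ nonpos_int (a / 2))
  (hb : ~ nonpos_int (1 + a - b))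
  (hf : ~ nonpos_int f)
  (hd : ~ nonpos_int (1 + a - d))
  (haf : ~ nonpos_int (a - f))
  (haN : ~ nonpos_int (1 + a + N%:R))
  (hden : f * (a - f) - d * b != 0)
  (hg : poch (f * (b + d - a) * (f - a) / (f * (a - f) - d * b)) N != 0) :
  let g := f * (b + d - a) * (f - a) / (f * (a - f) - d * b) in
  hyp_terminating
    [:: a; 1 + a / 2; b; a - f + 1; d; f + 1; - N%:R]
    [:: a / 2; 1 + a - b; f; 1 + a - d; a - f; 1 + a + N%:R] 1 N
  = (poch (1 + a) N * poch (a - b - d) N) / (poch (1 + a - b) N * poch (1 + a - d) N)
    * (poch (g + 1) N / poch g N).
Proof.
move=> g; have adm : dougall_admissible a b d N by [].
rewrite /hyp_terminating.
rewrite (eq_bigr _ (fun (k : 'I_N.+1) _ => very_well_poised_7F6_term k adm hf haf)).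
rewrite big_split /= -mulr_suml -/(dougall_sum a b d N) -/(dougall_weighted_sum a b d N).
rewrite dougall_sumE //; case: N haN hg adm @g => [|N] haN hg adm g.
  by rewrite /dougall_weighted_sum /dougall_rhs big_ord1 !mul0r addr0 !poch0 !(mulr1, invr1).
have hg0 : g != 0 by move: hg; rewrite pochSl mulf_eq0 negb_or => /andP[].
rewrite dougall_weighted_sumE // (poch_addr1E _ hg0) /dougall_rhs.
rewrite [poch (1 + a - b - d) N.+1]pochS [poch (a - b - d) N.+1]pochSl.
have -> : a - b - d + 1 = 1 + a - b - d by ring.
move: hg0; rewrite /g !mulf_eq0 !negb_or => /andP[/andP[/andP[hf0 hbda] hfa] _].
by field; rewrite hg hden hf0 hbda hfa !poch_neq0 // not_nonpos_int_neq0.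
Qed.
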